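(* Let $\mathcal{C}$ and $\mathcal{C}'$ be non-attacking $q$-configurations. Then there exists $N$ such that for every $n\ge N$ with $\mathrm{inloss}_n(\mathcal{C}) = \mathrm{inloss}_n(\mathcal{C}')$ we have $\gamma(\mathcal{C}') - \gamma(\mathcal{C}) = \eta_n(\mathcal{C}') - \eta_n(\mathcal{C})$.
   Context: For $n \in \mathbb{N}$ let $I_n = \{\lfloor (2-n)/2 \rfloor, \ldots, \lfloor n/2 \rfloor\}$ and $\mathcal{B}_n = I_n \times I_n$. A $q$-configuration is a set $\mathcal{C} \subset \mathbb{Z}\times\mathbb{Z}$ with $|\mathcal{C}|=q$. For $Q=(x,y)$, $A(Q) = \{(x+i,y),(x,y+i),(x+i,y+i),(x+i,y-i) : i \in \mathbb{Z}\setminus\{0\}\}$ and $A(\mathcal{C}) = \bigcup_{Q\in\mathcal{C}} A(Q)$. $\mathcal{C}$ is non-attacking if $Q'\notin A(Q)$ for all distinct $Q,Q'\in\mathcal{C}$. The attacking number is $a_{\mathcal{C}}(s) = \#\{Q \in \mathcal{C} : s \in A(Q)\}$ and $\mathrm{inloss}_n(\mathcal{C}) = \sum_{s \in A(\mathcal{C})\cap\mathcal{B}_n} (a_{\mathcal{C}}(s) - 1)$. A Queen at $(x_1,x_2)$ is even if $x_1-x_2\equiv 0\pmod 2$ and odd otherwise; if $\mathcal{C}$ has $e$ even and $o$ odd Queens, $\gamma(\mathcal{C}) = 12\binom{e}{2}+12\binom{o}{2}+10eo$, and $\eta_n(\mathcal{C}) = \sum_{s\in A(\mathcal{C})\cap\mathcal{B}_n}\left[\binom{a_{\mathcal{C}}(s)}{2}-(a_{\mathcal{C}}(s)-1)\right]$.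 *)

From HB Require Import structures.
From mathcomp Require Import all_boot all_order all_algebra.
From mathcomp Require Import finmap.
Set Implicit Arguments. Unset Strict Implicit. Unset Printing Implicit Defensive.
Import Order.TTheory GRing.Theory Num.Theory.
Local Open Scope fset_scope.
Local Open Scope ring_scope.

Definition square := (int * int)%type.

(* I_n = {floor((2-n)/2), ..., floor(n/2)}; intdiv's %/ with positive divisor is floor division. *)
Definition Ilo (n : nat) : int := ((2 - n%:Z) %/ 2)%Z.
Definition Ihi (n : nat) : int := ((n%:Z) %/ 2)%Z.
Definition Iseq (n : nat) : seq int :=
  [seq Ilo n + i%:Z | i <- iota 0 (absz (Ihi n - Ilo n + 1))].
Definition Bseq (n : nat) : seq square :=
  [seq (x, y) | x <- Iseq n, y <- Iseq n].

(* attacks Q s  <=>  s \in A(Q), i.e. s = Q + i*d for some i <> 0 and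
   d in {(1,0),(0,1),(1,1),(1,-1)}. *)
Definition attacks (Q s : square) : bool :=
  let dx := s.1 - Q.1 in let dy := s.2 - Q.2 in
  (s != Q) && [|| dy == 0, dx == 0, dx == dy | dx == - dy].

Definition nonattacking (C : {fset square}) : Prop :=
  forall Q Q', Q \in C -> Q' \in C -> Q != Q' -> ~~ attacks Q Q'.

Definition anum (C : {fset square}) (s : square) : nat :=
  #|` [fset Q in C | attacks Q s]|.

(* inloss_n(C) = sum over s in A(C) ∩ B_n of (a_C(s) - 1);
   s \in A(C) iff a_C(s) > 0. *)
Definition inloss (n : nat) (C : {fset square}) : int :=
  \sum_(s <- Bseq n | (0 < anum C s)%N) ((anum C s)%:Z - 1).

Definition etaQ (n : nat) (C : {fset square}) : int :=
  \sum_(s <- Bseq n | (0 < anum C s)%N)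
     (('C(anum C s, 2))%:Z - ((anum C s)%:Z - 1)).

Definition even_queen (Q : square) : bool := ((Q.1 - Q.2) %% 2)%Z == 0.

Definition num_even (C : {fset square}) : nat := #|` [fset Q in C | even_queen Q]|.
Definition num_odd (C : {fset square}) : nat := #|` [fset Q in C | ~~ even_queen Q]|.

Definition gammaQ (C : {fset square}) : int :=
  (12 * 'C(num_even C, 2) + 12 * 'C(num_odd C, 2) + 10 * num_even C * num_odd C)%N%:Z.

From Pilot Require Import Defs.
From HB Require Import structures.
From mathcomp Require Import all_boot all_order all_algebra.
From mathcomp Require Import finmap zify.
Set Implicit Arguments. Unset Strict Implicit. Unset Printing Implicit Defensive.
Import Order.TTheory GRing.Theory Num.Theory.
Local Open Scope fset_scope.
Local Open Scope ring_scope.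

(* Two distinct non-attacking queens attack exactly the intersection points of
   their lines: twelve squares if they have the same parity and ten otherwise,
   since the two diagonal-diagonal intersections are lattice points only for
   equal parity.  Hence gamma(C) counts the pairs {Q, Q'} of C together with a
   square attacked by both, and once B_n contains all these squares double
   counting gives sum_(s in B_n) binom(a_C(s), 2) = gamma(C).  As
   eta_n(C) = sum_(s in B_n) binom(a_C(s), 2) - inloss_n(C), the theorem follows
   by subtraction. *)

Lemma card_fset_count (T : choiceType) (A : {fset T}) (P : pred T) :
  #|` [fset x in A | P x]| = count P A.
Proof. by rewrite card_fset_sum1 -big_fset_condE sum1_count. Qed.

Lemma sum_nat_bool (T : Type) (r : seq T) (P : pred T) : (\sum_(x <- r) P x)%N = count P r.
Proof. by rewrite -sum1_count [RHS]big_mkcond. Qed.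

Lemma sum_mem_subset (T : eqType) (B L : seq T) :
  uniq B -> uniq L -> {subset L <= B} -> (\sum_(s <- B) (s \in L))%N = size L.
Proof.
move=> uB uL sLB; rewrite sum_nat_bool -size_filter.
apply/perm_size/uniq_perm; rewrite ?filter_uniq // => x.
by rewrite mem_filter andb_idr //; apply: sLB.
Qed.

Lemma sum_distinct_pairs (T : eqType) (r : seq T) (P : pred T) : uniq r ->
  (\sum_(x <- r) \sum_(y <- r | y != x) (P x && P y))%N = (count P r * (count P r).-1)%N.
Proof.
move=> ur.
have sq : (\sum_(x <- r) \sum_(y <- r) (P x && P y))%N = (count P r * count P r)%N.
  rewrite -sum_nat_bool big_distrlr; apply: eq_bigr => x _.
  by apply: eq_bigr => y _; rewrite /= mulnb.
have diag : (\sum_(x <- r) \sum_(y <- r) (P x && P y))%N =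
            (count P r + \sum_(x <- r) \sum_(y <- r | y != x) (P x && P y))%N.
  rewrite -sum_nat_bool -big_split; apply: eq_big_seq => x xr.
  by rewrite (bigD1_seq x) //= andbb.
move: diag; rewrite sq; case: (count P r) => [|c] /=; lia.
Qed.

Definition in_box (K : nat) (s : square) : bool :=
  (- K%:Z <= s.1 <= K%:Z) && (- K%:Z <= s.2 <= K%:Z).

Lemma fset_in_box (C : {fset square}) : exists K, forall Q, Q \in C -> in_box K Q.
Proof.
exists (\sum_(Q <- C) (absz Q.1 + absz Q.2))%N => -[a b] QC.
have : (absz a + absz b <= \sum_(Q <- C) (absz Q.1 + absz Q.2))%N.
  by rewrite (bigD1_seq (a, b)) ?fset_uniq //= leq_addr.
rewrite /in_box /=; lia.
Qed.

Lemma Iseq_uniq n : uniq (Iseq n).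
Proof. by rewrite map_inj_uniq ?iota_uniq // => i j; lia. Qed.

Lemma mem_Iseq n K (x : int) : (2 * K < n)%N -> - K%:Z <= x <= K%:Z -> x \in Iseq n.
Proof.
move=> Kn xK; apply/mapP; exists (absz (x - Ilo n)); last by rewrite /Ilo; lia.
by rewrite mem_iota /Ilo /Ihi; lia.
Qed.

Lemma Bseq_uniq n : uniq (Defs.Bseq n).
Proof. by apply: allpairs_uniq => [||[? ?] [? ?] _ _]; rewrite ?Iseq_uniq. Qed.

Lemma in_box_Bseq n K s : (2 * K < n)%N -> in_box K s -> s \in Defs.Bseq n.
Proof.
case: s => x y Kn /andP[xK yK]; apply: allpairs_f; exact: mem_Iseq Kn _.
Qed.

Lemma eq_even_queen (a b c d : int) :
  (even_queen (a, b) == even_queen (c, d)) = (((a - b) %% 2)%Z == ((c - d) %% 2)%Z).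
Proof. by rewrite /even_queen /=; apply/eqP/eqP; lia. Qed.

Lemma not_attacks_lines (Q Q' : square) : Q != Q' -> ~~ attacks Q Q' ->
  [/\ Q.1 != Q'.1, Q.2 != Q'.2, Q.1 - Q.2 != Q'.1 - Q'.2 & Q.1 + Q.2 != Q'.1 + Q'.2].
Proof.
case: Q Q' => [a b] [c d]; rewrite /attacks /= !xpair_eqE => QQ' notQQ'.
by split; move: QQ' notQQ'; lia.
Qed.

(* The intersections of each line through Q with the three lines through Q'
   not parallel to it.  A point on two lines of Q is Q itself, so for
   non-attacking Q and Q' the twelve points are pairwise distinct. *)
Definition common_attacks (Q Q' : square) : seq square :=
  let: (a, b) := Q in let: (c, d) := Q' in
  [:: (c, b); (b + c - d, b); (c + d - b, b); (a, d); (a, a - c + d); (a, c + d - a);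
      (d + a - b, d); (c, c - a + b); (a + b - d, d); (c, a + b - c)] ++
  if even_queen Q == even_queen Q' then
    [:: ((a - b + c + d) %/ 2, (c + d - a + b) %/ 2)%Z;
        ((a + b + c - d) %/ 2, (a + b - c + d) %/ 2)%Z]
  else [::].

Ltac solve_bool_lia :=
  lazymatch goal with
  | |- is_true (_ && _) => apply/andP; split; solve_bool_lia
  | |- is_true (_ || _) =>
      first [apply/orP; left; solve_bool_lia | apply/orP; right; solve_bool_lia]
  | |- _ => lia
  end.

Lemma mem_common_attacks (Q Q' s : square) : Q != Q' -> ~~ attacks Q Q' ->
  (s \in common_attacks Q Q') = attacks Q s && attacks Q' s.
Proof.
move=> /not_attacks_lines/[apply]; case: Q Q' s => [a b] [c d] [x y] /=.
rewrite /common_attacks /attacks eq_even_queen /= !xpair_eqE => -[bd ac df sm].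
case: ifP => parity; apply/idP/idP; rewrite ?inE ?xpair_eqE.
1,3: by move=> hs; repeat case/orP: hs => hs; case/andP: hs => /eqP-> /eqP->; solve_bool_lia.
all: move=> /andP[/andP[_ /or4P onQ] /andP[_ /or4P onQ']].
all: by case: onQ => /eqP onQ; case: onQ' => /eqP onQ'; solve_bool_lia.
Qed.

Lemma common_attacks_uniq (Q Q' : square) : Q != Q' -> ~~ attacks Q Q' ->
  uniq (common_attacks Q Q').
Proof.
move=> /not_attacks_lines/[apply]; case: Q Q' => [a b] [c d] /= [bd ac df sm].
rewrite /common_attacks eq_even_queen.
by case: ifP => parity /=; rewrite !inE !xpair_eqE !negb_or; solve_bool_lia.
Qed.

Lemma size_common_attacks (Q Q' : square) : size (common_attacks Q Q') =
  (10 + 2 * (even_queen Q && even_queen Q') + 2 * (~~ even_queen Q && ~~ even_queen Q'))%N.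
Proof.
by case: Q Q' => [a b] [c d]; rewrite /common_attacks size_cat; do 2!case: even_queen.
Qed.

Lemma common_attacks_in_box K (Q Q' : square) : in_box K Q -> in_box K Q' ->
  all (in_box (3 * K)) (common_attacks Q Q').
Proof.
case: Q Q' => [a b] [c d]; rewrite /in_box /common_attacks /=.
move=> /andP[/andP[? ?] /andP[? ?]] /andP[/andP[? ?] /andP[? ?]].
by case: ifP => _ /=; solve_bool_lia.
Qed.

Lemma sum_Bseq_common_attacks n K (Q Q' : square) : Q != Q' -> ~~ attacks Q Q' ->
  in_box K Q -> in_box K Q' -> (2 * (3 * K) < n)%N ->
  (\sum_(s <- Defs.Bseq n) (attacks Q s && attacks Q' s))%N = size (common_attacks Q Q').
Proof.
move=> QQ' notQQ' QK Q'K Kn.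
rewrite -(sum_mem_subset (Bseq_uniq n) (common_attacks_uniq QQ' notQQ')).
  by apply: eq_bigr => s _; rewrite mem_common_attacks.
by move=> s /(allP (common_attacks_in_box QK Q'K)); apply: in_box_Bseq.
Qed.

Lemma bin2_mul2 k : ('C(k, 2) * 2 = k * k.-1)%N.
Proof. by rewrite (bin_ffact k 2) ffactnS ffactn1. Qed.

Lemma bin2_anum (C : {fset square}) s :
  ('C(anum C s, 2) * 2 = \sum_(Q <- C) \sum_(Q' <- C | Q' != Q) (attacks Q s && attacks Q' s))%N.
Proof.
by rewrite bin2_mul2 /anum card_fset_count sum_distinct_pairs ?fset_uniq.
Qed.

Lemma sum_bin2_anum (C : {fset square}) K n : nonattacking C ->
  (forall Q, Q \in C -> in_box K Q) -> (2 * (3 * K) < n)%N ->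
  (\sum_(s <- Defs.Bseq n) 'C(anum C s, 2) =
    12 * 'C(num_even C, 2) + 12 * 'C(num_odd C, 2) + 10 * num_even C * num_odd C)%N.
Proof.
move=> hC CK Kn.
apply/eqP; rewrite -(eqn_pmul2r (_ : 0 < 2)%N) //; apply/eqP; rewrite big_distrl /=.
under eq_bigr do rewrite bin2_anum.
(* [predT Q && predT Q'] is [1], written so that [sum_distinct_pairs] applies. *)
transitivity (\sum_(Q <- C) \sum_(Q' <- C | Q' != Q) (10 * (predT Q && predT Q') +
    2 * (even_queen Q && even_queen Q') + 2 * (~~ even_queen Q && ~~ even_queen Q')))%N.
  rewrite exchange_big; apply: eq_big_seq => Q QC /=.
  rewrite exchange_big big_seq_cond [RHS]big_seq_cond.
  apply: eq_bigr => Q' /andP[Q'C Q'Q]; rewrite eq_sym in Q'Q.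
  by rewrite (sum_Bseq_common_attacks Q'Q (hC Q Q' QC Q'C Q'Q) (CK Q QC) (CK Q' Q'C) Kn)
    size_common_attacks.
under eq_bigr do rewrite 2!big_split -3!big_distrr /=.
rewrite 2!big_split -3!big_distrr /= !sum_distinct_pairs ?fset_uniq //.
rewrite /num_even /num_odd !card_fset_count.
rewrite (sum_distinct_pairs predT (fset_uniq C)) count_predT -(count_predC even_queen C).
set e := count even_queen C; set o := count _ C.
by rewrite !mulnDl -!mulnA !bin2_mul2; nia.
Qed.

Lemma sum_bin2_anum_eventually (C : {fset square}) : nonattacking C ->
  exists N, forall n, (N <= n)%N ->
    \sum_(s <- Defs.Bseq n | (0 < anum C s)%N) ('C(anum C s, 2))%:Z = gammaQ C.
Proof.
move=> hC; have [K CK] := fset_in_box C.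
exists (2 * (3 * K)).+1 => n Kn.
rewrite /gammaQ -(sum_bin2_anum hC CK Kn) (big_morph Posz PoszD (erefl 0%:Z)) big_mkcond.
by apply: eq_bigr => s _; case: (anum C s).
Qed.

Lemma etaQE n (C : {fset square}) : etaQ n C =
  \sum_(s <- Defs.Bseq n | (0 < anum C s)%N) ('C(anum C s, 2))%:Z - inloss n C.
Proof. by rewrite /etaQ /inloss sumrB. Qed.

Theorem mainTheorem8 (q : nat) (C C' : {fset square}) :
  #|` C| = q -> #|` C'| = q -> nonattacking C -> nonattacking C' ->
  exists N : nat, forall n : nat, (N <= n)%N -> inloss n C = inloss n C' ->
    gammaQ C' - gammaQ C = etaQ n C' - etaQ n C.
Proof.
move=> _ _ hC hC'.
have [N sumC] := sum_bin2_anum_eventually hC.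
have [N' sumC'] := sum_bin2_anum_eventually hC'.
exists (maxn N N') => n; rewrite geq_max => /andP[Nn N'n] loss.
by rewrite !etaQE sumC // sumC' // loss opprB addrA subrK.
Qed.
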